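(* Let $G$ be a graph on $\{x_1,\dots,x_n\}$ such that the edge ideal $I=I(G)\subset S$ has linear quotients, and let $P\subset S$ be a monomial prime ideal (an ideal generated by a subset of the variables). Then $PI$ has linear quotients.
   Context: $S=K[x_1,\dots,x_n]$, $I(G)=(x_ix_j:\{x_i,x_j\}\in E(G))$. A monomial ideal $J$ has linear quotients if its minimal monomial generators can be ordered $u_1,\dots,u_s$ such that for each $i=2,\dots,s$ the colon ideal $(u_1,\dots,u_{i-1}):(u_i)$ is generated by variables. *)

From mathcomp Require Import all_boot.
Set Implicit Arguments. Unset Strict Implicit. Unset Printing Implicit Defensive.

(* Monomials of S = K[x_0,...,x_{n-1}] are represented by exponent vectors. *)
Definition monom (n : nat) := {ffun 'I_n -> nat}.

Definition mmul n (a b : monom n) : monom n := [ffun k => a k + b k].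

Definition mvar n (k : 'I_n) : monom n := [ffun j => nat_of_bool (j == k)].

Definition mdvd n (a b : monom n) : bool := [forall k, a k <= b k].

Definition in_mideal n (U : seq (monom n)) (m : monom n) : bool :=
  has (fun u => mdvd u m) U.

Definition mingens n (U : seq (monom n)) : seq (monom n) :=
  undup [seq u <- U | all (fun v => mdvd v u ==> (v == u)) U].

(* The colon ideal (u_1,...,u_{i-1}) : (u_i) (0-indexed: generators before
   position i, colon by the i-th one) is generated by a set of variables V.
   Colon ideals of monomial ideals are monomial ideals, and a monomial ideal
   is determined by the monomials it contains, so this compares monomials. *)
Definition colon_gen_by_vars n (ord : seq (monom n)) (i : nat) : Prop :=
  exists V : {set 'I_n}, forall m : monom n,
    in_mideal (take i ord) (mmul m (nth m ord i)) =
    [exists k in V, mdvd (mvar k) m].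

Definition linear_quotients n (U : seq (monom n)) : Prop :=
  exists ord : seq (monom n),
    perm_eq ord (mingens U) /\
    forall i, 0 < i < size ord -> colon_gen_by_vars ord i.

Definition simple_graph n (e : rel 'I_n) : Prop :=
  symmetric e /\ irreflexive e.

Definition edge_gens n (e : rel 'I_n) : seq (monom n) :=
  [seq mmul (mvar p.1) (mvar p.2) | p <- enum [pred p : 'I_n * 'I_n | e p.1 p.2]].

Definition prime_gens n (A : {set 'I_n}) : seq (monom n) :=
  [seq mvar k | k <- enum A].

Definition prod_gens n (U W : seq (monom n)) : seq (monom n) :=
  [seq mmul u w | u <- U, w <- W].

From mathcomp Require Import all_boot zify.
Set Implicit Arguments. Unset Strict Implicit. Unset Printing Implicit Defensive.

(* Order the generators x_a u of PI first by the given order u_1, ..., u_s of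
   the generators of I, then by a fixed order of the variables of P, keeping
   only the first occurrence of repeated products.  A colon ideal
   (w_1, ..., w_(i-1)) : w_i is generated by variables iff every earlier w_j
   admits an earlier w_l and a variable x_t with w_l | x_t w_i and
   x_t | w_j / gcd(w_j, w_i).  For w = x_K u_j and an earlier w' = x_K' u_j':
   if j' = j, take w' itself and t = K'.  Otherwise linear quotients of I give
   j'' < j and t with u_j'' | x_t u_j and x_t | u_j' / gcd(u_j', u_j); then one
   of x_K u_j'', x_K' u_j'' or w' itself is a witness, and the last case only
   needs the generators of I to be products of two variables. *)

Section FirstOccurrence.
Variables (T : eqType) (s : seq T).

(* [undup] keeps the last occurrence of each element; this keeps the first. *)
Definition undup_first := sort (fun x y => index x s <= index y s) (undup s).

Lemma undup_first_uniq : uniq undup_first.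
Proof. by rewrite sort_uniq undup_uniq. Qed.

Lemma mem_undup_first : undup_first =i s.
Proof. by move=> x; rewrite mem_sort mem_undup. Qed.

Lemma ltn_index_undup_first x0 i j :
  i < size undup_first -> j < size undup_first ->
  (index (nth x0 undup_first i) s < index (nth x0 undup_first j) s) = (i < j).
Proof.
set W := undup_first => iW jW.
have W_sorted : sorted (fun x y => index x s <= index y s) W.
  by apply: sort_sorted => x y; apply: leq_total.
have le_index i' j' : i' < size W -> j' < size W -> i' < j' ->
    index (nth x0 W i') s <= index (nth x0 W j') s.
  have index_trans : transitive (fun x y => index x s <= index y s).
    by move=> y x z; apply: leq_trans.
  by move=> i'W j'W; apply: (sorted_ltn_nth index_trans x0 W_sorted).
have inW k : k < size W -> nth x0 W k \in s.
  by move=> kW; rewrite -mem_undup_first mem_nth.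
case: (ltngtP i j) => [ij | ji | ->]; last by rewrite ltnn.
- rewrite ltn_neqAle le_index // andbT; apply: contraTneq ij => /(congr1 (nth x0 s)).
  rewrite !nth_index ?inW // => /eqP.
  by rewrite nth_uniq ?undup_first_uniq // => /eqP ->; rewrite ltnn.
- by rewrite ltnNge le_index.
Qed.

End FirstOccurrence.

Lemma nth_allpairs (S T R : Type) (f : S -> T -> R) (s : seq S) (t : seq T)
    x0 y0 z0 i j :
  i < size s -> j < size t ->
  nth z0 [seq f x y | x <- s, y <- t] (i * size t + j) = f (nth x0 s i) (nth y0 t j).
Proof.
elim: s i => [|x s IHs] [|i] //= si tj.
  by rewrite nth_cat size_map tj (nth_map y0).
by rewrite nth_cat size_map mulSn -addnA ltnNge leq_addr /= addKn IHs.
Qed.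

Section Monomials.
Variable n : nat.
Implicit Types (a b c m u w : monom n) (k l p q : 'I_n).

Definition mone : monom n := [ffun _ => 0].

Definition mdeg m := \sum_k m k.

Lemma mmulE a b k : mmul a b k = a k + b k.
Proof. by rewrite ffunE. Qed.

Lemma mvarE k l : mvar k l = (l == k).
Proof. by rewrite ffunE. Qed.

Lemma mmulC a b : mmul a b = mmul b a.
Proof. by apply/ffunP => k; rewrite !mmulE addnC. Qed.

Lemma mmulA a b c : mmul a (mmul b c) = mmul (mmul a b) c.
Proof. by apply/ffunP => k; rewrite !mmulE addnA. Qed.

Lemma mmulCA a b c : mmul a (mmul b c) = mmul b (mmul a c).
Proof. by apply/ffunP => k; rewrite !mmulE addnCA. Qed.

Lemma mdvd_mul2l a b c : mdvd b c -> mdvd (mmul a b) (mmul a c).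
Proof. by move=> /forallP bc; apply/forallP => k; rewrite !mmulE leq_add2l. Qed.

Lemma mdeg_mmul a b : mdeg (mmul a b) = mdeg a + mdeg b.
Proof. by rewrite /mdeg -big_split; apply: eq_bigr => k _; rewrite mmulE. Qed.

Lemma mdeg_mvar k : mdeg (mvar k) = 1.
Proof.
by rewrite /mdeg (bigD1 k) //= mvarE eqxx big1 // => l /negbTE; rewrite mvarE => ->.
Qed.

Lemma mdvd_eq_mdeg a b : mdvd a b -> mdeg a = mdeg b -> a = b.
Proof.
move=> /forallP ab; rewrite /mdeg => deg_ab; apply/ffunP => k.
move: deg_ab; rewrite (bigD1 k) //= [in RHS](bigD1 k) //=.
set ra := (X in a k + X = _); set rb := (X in _ = b k + X).
have : ra <= rb by apply: leq_sum => l _.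
by move: (ab k); lia.
Qed.

Lemma mem_mingens_equideg (U : seq (monom n)) d :
  {in U, forall u, mdeg u = d} -> mingens U =i U.
Proof.
move=> degU u; rewrite mem_undup mem_filter andbC.
case Uu: (u \in U) => //=; apply/allP => v Uv; apply/implyP => vu.
by apply/eqP/mdvd_eq_mdeg; rewrite // !degU.
Qed.

Lemma exchange_var_witness m k l : k != l ->
  mdvd (mmul m (mvar k)) (mmul (mvar k) (mmul m (mvar l))) /\
  mmul m (mvar l) k < mmul m (mvar k) k.
Proof.
move=> kl; split; first by apply/forallP => c; rewrite !mmulE !mvarE; lia.
by rewrite !mmulE !mvarE eqxx (negbTE kl) addn0 addn1.
Qed.

Lemma quadratic_pivot p q k : 0 < mmul (mvar p) (mvar q) k ->
  exists l, mmul (mvar p) (mvar q) = mmul (mvar k) (mvar l).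
Proof.
rewrite mmulE !mvarE.
have [-> _|_] := eqVneq k p; first by exists q.
by have [-> _|//] := eqVneq k q; exists p; rewrite mmulC.
Qed.

Lemma quadratic_witness (a b p q k k' : 'I_n) u u' :
  u = mmul (mvar a) (mvar b) -> u' = mmul (mvar p) (mvar q) ->
  k != k' -> u k < u' k -> mmul (mvar k') u' k' <= mmul (mvar k) u k' ->
  mmul (mvar k') u' != mmul (mvar k) u ->
  exists t, mdvd (mmul (mvar k') u') (mmul (mvar t) (mmul (mvar k) u)) /\
            mmul (mvar k) u t < mmul (mvar k') u' t.
Proof.
move=> -> -> kk' uk uk'.
have [l ->] : exists l, mmul (mvar p) (mvar q) = mmul (mvar k) (mvar l).
  by apply: quadratic_pivot; lia.
have [l' ->] : exists l', mmul (mvar a) (mvar b) = mmul (mvar k') (mvar l').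
  apply: quadratic_pivot; move: uk'.
  by rewrite !mmulE !mvarE eqxx [k' == k]eq_sym (negbTE kk'); lia.
rewrite !mmulA [mmul (mvar k') (mvar k)]mmulC => ne_ll'.
have ll' : l != l' by apply: contraNneq ne_ll' => ->.
by exists l; apply: exchange_var_witness.
Qed.

End Monomials.

Arguments mone {n}.

Section ColonWitnesses.
Variable n : nat.
Implicit Types (L : seq (monom n)) (w : monom n).

Definition colon_witnesses L i := forall j, j < i ->
  exists j' t, [/\ j' < i, mdvd (nth mone L j') (mmul (mvar t) (nth mone L i))
                 & nth mone L i t < nth mone L j t].

Lemma colon_gen_by_varsP L i :
  i < size L -> colon_gen_by_vars L i <-> colon_witnesses L i.
Proof.
move=> iL; have take_iL : size (take i L) = i by rewrite size_takel // ltnW.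
have nth_take_i j : j < i -> nth mone (take i L) j = nth mone L j.
  by move=> ji; rewrite nth_take.
set w := nth mone L i.
split=> [[V colonV] j ji | witL].
(* L_j / gcd(L_j, L_i) lies in the colon ideal, hence is divisible by a
   generating variable x_t, and x_t itself lies in the colon ideal. *)
- have Lj_take : nth mone L j \in take i L by rewrite -nth_take_i // mem_nth ?take_iL.
  have := colonV [ffun c => nth mone L j c - w c].
  rewrite (set_nth_default mone) // -/w.
  have -> : in_mideal (take i L) (mmul [ffun c => nth mone L j c - w c] w).
    apply/hasP; exists (nth mone L j) => //.
    by apply/forallP => c; rewrite !ffunE; lia.
  move/esym/existsP => [t /andP [tV /forallP jt]].
  have := colonV (mvar t); rewrite (set_nth_default mone) // -/w.
  have -> : [exists k in V, mdvd (mvar k) (mvar t)].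
    by apply/existsP; exists t; rewrite tV; apply/forallP => c.
  case/hasP => v v_take /forallP vt.
  have vi : index v (take i L) < i by rewrite -[X in _ < X]take_iL index_mem.
  exists (index v (take i L)), t; rewrite -nth_take_i // nth_index //; split=> //.
    by apply/forallP => c; move: (vt c); rewrite !mmulE addnC.
  by move: (jt t); rewrite !ffunE eqxx; lia.
- exists [set t | [exists j : 'I_i, mdvd (nth mone L j) (mmul (mvar t) w)]] => m.
  rewrite (set_nth_default mone) // -/w; apply/idP/existsP.
  + case/hasP => v v_take /forallP vm.
    have vi : index v (take i L) < i by rewrite -[X in _ < X]take_iL index_mem.
    have [j' [t [j'i j'dvd wt]]] := witL _ vi.
    exists t; rewrite inE; apply/andP; split.
      by apply/existsP; exists (Ordinal j'i).
    apply/forallP => c; rewrite mvarE; case: eqP => //= ->.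
    by move: (vm t) wt; rewrite /w -(nth_take_i _ vi) nth_index // mmulE; lia.
  + case=> t /andP []; rewrite inE => /existsP [j /forallP jt] /forallP tm.
    apply/hasP; exists (nth mone L j).
      by rewrite -nth_take_i // mem_nth ?take_iL.
    by apply/forallP => c; move: (jt c) (tm c); rewrite !mmulE !mvarE; lia.
Qed.

Definition index_witnesses L := forall w w',
  w \in L -> index w' L < index w L ->
  exists w'' t, [/\ index w'' L < index w L, mdvd w'' (mmul (mvar t) w) & w t < w' t].

Lemma colon_witnesses_undup_first L : index_witnesses L ->
  forall i, i < size (undup_first L) -> colon_witnesses (undup_first L) i.
Proof.
set W := undup_first L => witL i iW j ji.
have inL k : k < size W -> nth mone W k \in L.
  by move=> kW; rewrite -mem_undup_first mem_nth.
have jW : j < size W by apply: ltn_trans iW.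
have index_ji : index (nth mone W j) L < index (nth mone W i) L.
  by rewrite ltn_index_undup_first.
have [w'' [t [w''i w''dvd w''t]]] := witL _ _ (inL _ iW) index_ji.
have w''W : w'' \in W.
  by rewrite mem_undup_first -index_mem (ltn_trans w''i) ?index_mem ?inL.
exists (index w'' W), t; rewrite nth_index //; split=> //.
by rewrite -(@ltn_index_undup_first _ L mone) ?index_mem // nth_index.
Qed.

End ColonWitnesses.

Section ProductWithPrime.
Variables (n : nat) (As : seq 'I_n) (ord : seq (monom n)).

Definition prime_mul_seq := [seq mmul (mvar a) u | u <- ord, a <- As].

Local Notation L := prime_mul_seq.
Local Notation r := (size As).

Lemma size_prime_mul_seq : size L = size ord * r.
Proof. exact: size_allpairs. Qed.

Lemma nth_prime_mul_seq a0 j k : j < size ord -> k < r ->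
  nth mone L (j * r + k) = mmul (mvar (nth a0 As k)) (nth mone ord j).
Proof. exact: nth_allpairs. Qed.

Lemma index_prime_mul_seq_le a0 j k : j < size ord -> k < r ->
  index (mmul (mvar (nth a0 As k)) (nth mone ord j)) L <= j * r + k.
Proof.
move=> jo kr; rewrite -(nth_prime_mul_seq a0 jo kr) leqNgt; apply/negP => lt_jk.
by have := before_find mone lt_jk; rewrite /= eqxx.
Qed.

Lemma prime_mul_seq_index a0 w : w \in L -> exists j k, [/\ j < size ord, k < r,
  index w L = j * r + k & w = mmul (mvar (nth a0 As k)) (nth mone ord j)].
Proof.
move=> Lw; have wL : index w L < size ord * r.
  by rewrite -size_prime_mul_seq index_mem.
have r0 : 0 < r by move: wL; case: (r) => //; rewrite muln0.
have [jo kr] : index w L %/ r < size ord /\ index w L %% r < r.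
  by rewrite ltn_divLR // ltn_pmod.
exists (index w L %/ r), (index w L %% r); split; rewrite -?divn_eq //.
by rewrite -nth_prime_mul_seq // -divn_eq nth_index.
Qed.

Hypothesis As_uniq : uniq As.
Hypothesis ord_quadratic :
  {in ord, forall u, exists p q, u = mmul (mvar p) (mvar q)}.
Hypothesis ord_colon : forall j, 0 < j < size ord -> colon_witnesses ord j.

Lemma prime_mul_seq_witnesses : index_witnesses L.
Proof.
move=> w w' Lw ww'.
have Lw' : w' \in L by rewrite -index_mem (ltn_trans ww') ?index_mem.
have [a0 _] : exists a0 : 'I_n, a0 \in As.
  by case/allpairsP: Lw => [[u a]] [_ ? _]; exists a.
have [j [k [jo kr rk_w w_def]]] := prime_mul_seq_index a0 Lw.
have [j' [k' [j'o k'r rk_w' w'_def]]] := prime_mul_seq_index a0 Lw'.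
move: w_def w'_def; set K := nth a0 As k; set K' := nth a0 As k'.
set u := nth mone ord j; set u' := nth mone ord j' => w_def w'_def.
have [jj' | j'j] : j = j' \/ j' < j by move: ww'; rewrite rk_w rk_w'; nia.
  have K'K : K' != K.
    rewrite nth_uniq //; apply: contraTneq ww' => k'k.
    by rewrite rk_w rk_w' jj' k'k ltnn.
  have [dvd lt] := exchange_var_witness u K'K.
  exists w', K'; split=> //;
    by rewrite w_def w'_def /u' -jj' -/u (mmulC (mvar K)) (mmulC (mvar K')).
have j_pos : 0 < j < size ord by rewrite jo andbT (leq_ltn_trans _ j'j).
have [j'' [t [j''j u''dvd ut]]] := ord_colon j_pos j'j.
set u'' := nth mone ord j'' in u''dvd.
have j''o : j'' < size ord by apply: ltn_trans jo.
have early c : c < r -> index (mmul (mvar (nth a0 As c)) u'') L < index w L.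
  move=> cr; apply: leq_ltn_trans (index_prime_mul_seq_le a0 j''o cr) _.
  by rewrite rk_w; nia.
have [wt | w't] := ltnP (w t) (w' t).
  exists (mmul (mvar K) u''), t; split; [exact: early | | by []].
  by rewrite w_def mmulCA; apply: mdvd_mul2l.
have tK : t = K.
  apply/eqP; move: w't ut; rewrite w_def w'_def !mmulE !mvarE -/u -/u'.
  by case: (t == K); case: (t == K') => //=; lia.
subst t; have KK' : K != K'.
  apply: contraTneq w't => eqKK'.
  by rewrite w_def w'_def -eqKK' -ltnNge !mmulE ltn_add2l.
have [wK' | w'K'] := ltnP (w K') (w' K').
  exists (mmul (mvar K') u''), K'; split; [exact: early | | by []].
  by rewrite w_def; apply: mdvd_mul2l.
(* Now x_K x_K' divides both w and w'. *)
have [a [b u_def]] := ord_quadratic (mem_nth mone jo).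
have [p [q u'_def]] := ord_quadratic (mem_nth mone j'o).
have ww'_ne : w' != w by apply: contraTneq ww' => ->; rewrite ltnn.
rewrite w_def w'_def in w'K' ww'_ne.
have [t [dvd lt]] := quadratic_witness u_def u'_def KK' ut w'K' ww'_ne.
by exists w', t; split=> //; rewrite w_def w'_def.
Qed.

End ProductWithPrime.

Lemma mem_prime_mul_seq n (A : {set 'I_n}) (ord U : seq (monom n)) :
  ord =i U -> prime_mul_seq (enum A) ord =i prod_gens (prime_gens A) U.
Proof.
move=> ordU w; apply/allpairsP/allpairsP.
  case=> [[u a] [ord_u Aa ->]].
  by exists (mvar a, u); rewrite -ordU; split=> //; apply: map_f.
case=> [[v u] [/mapP [a Aa ->] Uu ->]].
by exists (u, a); rewrite ordU.
Qed.

Theorem lemma3p3 (n : nat) (e : rel 'I_n) (A : {set 'I_n}) :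
  simple_graph e ->
  linear_quotients (edge_gens e) ->
  linear_quotients (prod_gens (prime_gens A) (edge_gens e)).
Proof.
move=> _ [ord [ord_mingens ord_lq]].
have edge_quadratic :
    {in edge_gens e, forall u, exists p q, u = mmul (mvar p) (mvar q)}.
  by move=> _ /mapP [[p q] _ ->]; exists p, q.
have edge_deg : {in edge_gens e, forall u, mdeg u = 2}.
  by move=> u /edge_quadratic [p [q ->]]; rewrite mdeg_mmul !mdeg_mvar.
have prod_deg : {in prod_gens (prime_gens A) (edge_gens e), forall w, mdeg w = 3}.
  move=> _ /allpairsP [[v u] [/mapP [k _ ->] /edge_deg deg_u ->]].
  by rewrite mdeg_mmul mdeg_mvar deg_u.
have ord_edges : ord =i edge_gens e.
  by move=> u; rewrite (perm_mem ord_mingens) (mem_mingens_equideg edge_deg).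
have ord_colon j : 0 < j < size ord -> colon_witnesses ord j.
  by move=> j_pos; apply/colon_gen_by_varsP; [case/andP: j_pos | exact: ord_lq].
set L := prime_mul_seq (enum A) ord.
have L_witnesses : index_witnesses L.
  apply: prime_mul_seq_witnesses ord_colon; first exact: enum_uniq.
  by move=> u; rewrite ord_edges; apply: edge_quadratic.
exists (undup_first L); split.
  apply: uniq_perm; rewrite ?undup_first_uniq ?undup_uniq // => w.
  rewrite mem_undup_first (mem_prime_mul_seq A ord_edges).
  by rewrite (mem_mingens_equideg prod_deg).
move=> i /andP [_ i_lt]; apply/colon_gen_by_varsP => //.
exact: colon_witnesses_undup_first L_witnesses _ i_lt.
Qed.
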